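(* For twisted knot diagrams $K$ with an even number $2n$ of bars, the quantity $S(K)=\left|\sum_{i=1}^n s(e_{2i-1})-\sum_{i=1}^n s(e_{2i})\right|$ is invariant under the generalized Reidemeister moves and the twisted Reidemeister moves (which preserve the parity of the number of bars).
   Context: A twisted knot diagram is a virtual knot diagram with finitely many bars on its edges; twisted Reidemeister moves: $\Omega_1^t$ (a bar passes through a virtual crossing), $\Omega_2^t$ (two adjacent bars on an edge cancel), $\Omega_3^t$ (a real crossing is replaced by the crossing with over/under exchanged and a bar added on each of its four adjacent semiarcs). If $K$ has $2n\geq2$ bars $b_1,\dots,b_{2n}$, they cut $K$ into edges $e_1,\dots,e_{2n}$ numbered consecutively along the orientation. For an edge $e$, let $o_\pm(e)$ be the number of positive/negative crossings at which $e$ is the over-strand and $u_\pm(e)$ the number at which $e$ is the under-strand (a crossing of $e$ with itself counted once in each), and $s(e)=u_+(e)+o_-(e)-u_-(e)-o_+(e)$. If $K$ has no bars set $S(K)=0$. (The value of $S(K)$ does not depend on which edge is labeled $e_1$.) *)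

(* Twisted knot diagrams are encoded as Gauss words with bars. *)
From HB Require Import structures.
From mathcomp Require Import all_boot all_order all_algebra.
Set Implicit Arguments. Unset Strict Implicit. Unset Printing Implicit Defensive.
Import Order.TTheory GRing.Theory Num.Theory.

(* An event met while travelling once around the oriented knot, starting
   from a base point:  None = a bar;
   Some (c, over, pos) = passage through the real crossing labelled c,
   as the over-strand iff over = true; the crossing is positive iff pos = true. *)
Definition event := option (nat * bool * bool).
Notation Bar := (@None (nat * bool * bool)).
Notation Pass c o s := (@Some (nat * bool * bool) (c, o, s)).

(* A twisted knot diagram (up to virtual moves and Omega_1^t, which do not
   change the Gauss word) is a (cyclically read) word of events. *)
Definition twisted_diagram := seq event.

Definition label (x : event) : option nat :=
  if x is Some (c, _, _) then Some c else None.
Definition labels (w : twisted_diagram) : seq nat := pmap label w.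

Definition gauss_ok (w : twisted_diagram) : Prop :=
  forall c : nat, count_mem c (labels w) = 0%N \/
    exists s : bool, [/\ count_mem c (labels w) = 2%N,
                         count_mem (Pass c true s) w = 1%N &
                         count_mem (Pass c false s) w = 1%N].

Definition nbars (w : twisted_diagram) : nat := count_mem Bar w.

(* Segments of the word between consecutive bars: seg_0, ..., seg_k,
   where k = nbars w. *)
Fixpoint split_bars (w : twisted_diagram) : seq (seq event) :=
  match w with
  | [::] => [:: [::]]
  | None :: w' => [::] :: split_bars w'
  | x :: w' => match split_bars w' with
               | s :: r => (x :: s) :: r
               | [::] => [:: [:: x]]
               end
  end.

(* Edge e_i (1 <= i <= k), i.e. the part of K between bar b_i and bar b_{i+1}
   (b_{k+1} = b_1), bars numbered in order from the base point. *)
Definition edge (w : twisted_diagram) (i : nat) : seq event :=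
  let segs := split_bars w in
  if (i < nbars w)%N then nth [::] segs i
  else nth [::] segs (nbars w) ++ nth [::] segs 0.

Definition o_plus (e : seq event) : nat :=
  count (fun x => if x is Some (_, true, true) then true else false) e.
Definition o_minus (e : seq event) : nat :=
  count (fun x => if x is Some (_, true, false) then true else false) e.
Definition u_plus (e : seq event) : nat :=
  count (fun x => if x is Some (_, false, true) then true else false) e.
Definition u_minus (e : seq event) : nat :=
  count (fun x => if x is Some (_, false, false) then true else false) e.

Definition s_edge (e : seq event) : int :=
  (u_plus e)%:Z + (o_minus e)%:Z - (u_minus e)%:Z - (o_plus e)%:Z.

Definition S_inv (w : twisted_diagram) : nat :=
  if nbars w == 0%N then 0%N
  else absz (((\sum_(1 <= i < (nbars w)./2.+1) s_edge (edge w (2 * i - 1)))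
             - (\sum_(1 <= i < (nbars w)./2.+1) s_edge (edge w (2 * i))))%R).

(* Reidemeister III data: strands T (top), M (middle), B (bottom);
   crossings x = T/M, y = T/B, z = M/B.  Booleans t, m, b give the order of the
   two crossings along T (x before y), M (x before z), B (y before z).
   Realizability (three oriented lines in the plane) forces
   eps_x eps_y = m b and eps_x eps_z = t b (as signs +-1). *)
Definition r3_T x y ex ey (t : bool) : seq event :=
  if t then [:: Pass x true ex; Pass y true ey] else [:: Pass y true ey; Pass x true ex].
Definition r3_M x z ex ez (m : bool) : seq event :=
  if m then [:: Pass x false ex; Pass z true ez] else [:: Pass z true ez; Pass x false ex].
Definition r3_B y z ey ez (b : bool) : seq event :=
  if b then [:: Pass y false ey; Pass z false ez] else [:: Pass z false ez; Pass y false ey].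

(* One move (in one direction); the theorem uses it in both directions. *)
Inductive move : twisted_diagram -> twisted_diagram -> Prop :=
  (* change of base point: same diagram *)
| mv_rot (w : twisted_diagram) (k : nat) : move w (rot k w)
| mv_R1 (a b : twisted_diagram) (c : nat) (o s : bool) :
    c \notin labels (a ++ b) ->
    move (a ++ [:: Pass c o s; Pass c (~~ o) s] ++ b) (a ++ b)
  (* Reidemeister II (both relative orientations of the strands) *)
| mv_R2 (a b e : twisted_diagram) (c d : nat) (s : bool) (under : seq event) :
    c != d -> c \notin labels (a ++ b ++ e) -> d \notin labels (a ++ b ++ e) ->
    (under = [:: Pass c false s; Pass d false (~~ s)] \/
     under = [:: Pass d false (~~ s); Pass c false s]) ->
    move (a ++ [:: Pass c true s; Pass d true (~~ s)] ++ b ++ under ++ e) (a ++ b ++ e)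
| mv_R3 (a b c d : twisted_diagram) (P Q R : seq event) (x y z : nat)
        (ex ey ez t m bb : bool) :
    uniq [:: x; y; z] ->
    (ex == ey) = (m == bb) -> (ex == ez) = (t == bb) ->
    perm_eq [:: P; Q; R] [:: r3_T x y ex ey t; r3_M x z ex ez m; r3_B y z ey ez bb] ->
    move (a ++ P ++ b ++ Q ++ c ++ R ++ d)
         (a ++ rev P ++ b ++ rev Q ++ c ++ rev R ++ d)
| mv_T2 (a b : twisted_diagram) : move (a ++ [:: Bar; Bar] ++ b) (a ++ b)
| mv_T3 (a b e : twisted_diagram) (c : nat) (o s : bool) :
    move (a ++ [:: Pass c o s] ++ b ++ [:: Pass c (~~ o) s] ++ e)
         (a ++ [:: Bar; Pass c (~~ o) s; Bar] ++ b ++ [:: Bar; Pass c o s; Bar] ++ e).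

From mathcomp Require Import all_boot all_order all_algebra.
From mathcomp Require Import zify ring.
Set Implicit Arguments. Unset Strict Implicit. Unset Printing Implicit Defensive.
Import Order.TTheory GRing.Theory Num.Theory.
Local Open Scope ring_scope.

(* Every passage through a crossing contributes +1 or -1 to s, so s is additive
   along the word.  Let alt K be the sum of these contributions with a sign that
   flips at every bar.  Read from the base point, the edges e_1, ..., e_2n carry
   alternating signs, the last one wrapping around through the base point, so
   S(K) = |alt K|.  Every Reidemeister or twisted move replaces blocks of the
   Gauss word by blocks with the same parity of bars, the same s and the same
   alt, hence preserves alt K; moving the base point only multiplies alt K by a
   sign because the number of bars is even. *)

Definition weight (x : event) : int :=
  if x is Some (_, o, s) then (if o == s then -1 else 1) else 0.
Arguments weight : simpl never.

Lemma s_edgeE w : s_edge w = \sum_(x <- w) weight x.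
Proof.
elim: w => [|x w IH]; first by rewrite big_nil.
rewrite big_cons -IH /s_edge /u_plus /o_minus /u_minus /o_plus.
by case: x => [[[c [] []]]|] /=; rewrite /weight /=; lia.
Qed.

Lemma s_edge_cat u v : s_edge (u ++ v) = s_edge u + s_edge v.
Proof. by rewrite !s_edgeE big_cat. Qed.

Lemma s_edge_perm u v : perm_eq u v -> s_edge u = s_edge v.
Proof. by move=> uv; rewrite !s_edgeE (perm_big _ uv). Qed.

Lemma nbars_cat u v : nbars (u ++ v) = (nbars u + nbars v)%N.
Proof. exact: count_cat. Qed.

Definition flip_over (x : event) : event :=
  if x is Some (c, o, s) then Some (c, ~~ o, s) else None.

Lemma flip_overK : involutive flip_over.
Proof. by case=> [[[c o] s]|] //=; rewrite negbK. Qed.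

Lemma weight_flip_over x : weight (flip_over x) = - weight x.
Proof. by case: x => [[[c [] []]]|]. Qed.

Lemma count_label w c : count_mem c (labels w) =
  (count_mem (Pass c true true) w + count_mem (Pass c true false) w +
   count_mem (Pass c false true) w + count_mem (Pass c false false) w)%N.
Proof.
elim: w => [|[[[c' o] s]|] w IH] //=; rewrite -/(labels w) IH.
rewrite !(inj_eq (@Some_inj _)) !xpair_eqE.
by case: (c' == c); case: o; case: s => /=; lia.
Qed.

Lemma gauss_count_flip w x : gauss_ok w -> count_mem (flip_over x) w = count_mem x w.
Proof.
case: x => [[[c o] s]|] // /(_ c); rewrite count_label /=.
by case=> [|[[] [? ? ?]]]; case: o; case: s => /=; lia.
Qed.

Lemma gauss_perm_flip w : gauss_ok w -> perm_eq (map flip_over w) w.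
Proof.
move=> gw; apply/allP => x _; apply/eqP; rewrite -(gauss_count_flip x gw) count_map.
by apply: eq_count => y /=; rewrite (can2_eq flip_overK flip_overK) eq_sym.
Qed.

Lemma gauss_s_edge w : gauss_ok w -> s_edge w = 0.
Proof.
move=> /gauss_perm_flip/s_edge_perm; rewrite !s_edgeE big_map.
under eq_bigr do rewrite weight_flip_over.
by rewrite sumrN; set S := \sum_(_ <- _) _; lia.
Qed.

Fixpoint alt (w : twisted_diagram) : int :=
  if w is x :: w' then (if x is Some _ then weight x + alt w' else - alt w') else 0.

Lemma alt_cat u v : alt (u ++ v) = alt u + (-1) ^+ nbars u * alt v.
Proof.
elim: u => [|[x|] u IH] /=; first by rewrite add0r mul1r.
  by rewrite IH addrA.
by rewrite IH exprS opprD mulN1r mulNr.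
Qed.

Lemma alt_barfree w : Bar \notin w -> alt w = s_edge w.
Proof.
elim: w => [|[x|] w IH] //=; rewrite inE // negb_or => /andP[_ /IH->].
by rewrite [RHS]s_edgeE big_cons -s_edgeE.
Qed.

Lemma size_split_bars w : size (split_bars w) = (nbars w).+1.
Proof. by elim: w => [|[x|] w IH] //=; [case: (split_bars w) IH | rewrite IH]. Qed.

Lemma alt_split_bars w :
  alt w = \sum_(0 <= k < (nbars w).+1) (-1) ^+ k * s_edge (nth [::] (split_bars w) k).
Proof.
elim: w => [|[x|] w IH] /=; first by rewrite big_nat1.
  rewrite IH -size_split_bars.
  case: (split_bars w) (size_split_bars w) => [|seg0 segs] //= _.
  rewrite !big_nat_recl //= !expr0 !mul1r addrA.
  by rewrite [s_edge (_ :: _)]s_edgeE big_cons -s_edgeE.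
rewrite IH big_nat_recl //= mulr0 add0r -sumrN.
by apply: eq_bigr => k _; rewrite exprS mulN1r mulNr.
Qed.

Lemma sum_alternating (f : nat -> int) m :
  \sum_(0 <= k < m.*2) (-1) ^+ k.+1 * f k = \sum_(0 <= i < m) (f i.*2.+1 - f i.*2).
Proof.
elim: m => [|m IH]; first by rewrite !big_geq.
have even_sign : (-1) ^+ m.*2 = 1 :> int by rewrite -signr_odd odd_double.
rewrite doubleS !big_nat_recr //= IH -addrA !exprS even_sign.
by congr (_ + _); ring.
Qed.

(* Without bars S is 0 by convention, which is |alt w| only because s(w) = 0. *)
Lemma S_inv_alt w : ~~ odd (nbars w) -> s_edge w = 0 -> S_inv w = `|alt w|%N.
Proof.
move=> even_w s0; rewrite /S_inv; case: eqP => [/count_memPn barfree|nonzero].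
  by rewrite alt_barfree // s0.
have [m n2] : exists m, nbars w = m.+1.*2.
  move: nonzero; have := odd_double_half (nbars w); rewrite (negbTE even_w) add0n.
  by case: (nbars w)./2 => [|m] <-; [|exists m].
set seg := fun k => s_edge (nth [::] (split_bars w) k).
have odd_edge i : (0 <= i < m.+1)%N -> s_edge (edge w (2 * i.+1 - 1)) = seg i.*2.+1.
  by move=> lt_im; rewrite /edge n2 ifT; [congr (s_edge (nth _ _ _)) | ]; lia.
have even_edge i : (0 <= i < m)%N -> s_edge (edge w (2 * i.+1)) = seg i.*2.+2.
  by move=> lt_im; rewrite /edge n2 ifT; [congr (s_edge (nth _ _ _)) | ]; lia.
have last_edge : s_edge (edge w (2 * m.+1)) = seg m.*2.+2 + seg 0.
  by rewrite /edge n2 -mul2n ltnn s_edge_cat mul2n.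
rewrite n2 doubleK big_add1 big_add1 /= -abszN opprB; congr absz.
rewrite alt_split_bars n2 [RHS]big_nat_recl // expr0 mul1r.
rewrite sum_alternating [X in _ = _ + X]sumrB (eq_big_nat _ _ odd_edge).
rewrite [X in X - _]big_nat_recr // last_edge (eq_big_nat _ _ even_edge).
rewrite [X in _ = _ + (X - _)]big_nat_recr //.
by rewrite /seg /=; ring.
Qed.

Lemma alt_rot w k : ~~ odd (nbars w) -> `|alt (rot k w)|%N = `|alt w|%N.
Proof.
rewrite /rot; move: (take k w) (drop k w) (cat_take_drop k w) => t d <-.
rewrite nbars_cat oddD !alt_cat => even_td.
have -> : (-1) ^+ nbars d = (-1) ^+ nbars t :> int.
  rewrite -[LHS]signr_odd -[RHS]signr_odd; move: even_td.
  by case: (odd (nbars t)); case: (odd (nbars d)).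
rewrite -signr_odd; case: (odd (nbars t)); rewrite ?expr1 ?expr0 ?mulN1r ?mul1r addrC //.
by rewrite -abszN opprD opprK.
Qed.

(* Blocks that may replace each other anywhere in a word without changing the
   parity of bars, s or alt. *)
Definition interchangeable (u v : twisted_diagram) : Prop :=
  [/\ odd (nbars u) = odd (nbars v), s_edge u = s_edge v & alt u = alt v].

Lemma interchangeable_refl u : interchangeable u u.
Proof. by []. Qed.

Lemma interchangeable_cat u v r r' :
  interchangeable u v -> interchangeable r r' -> interchangeable (u ++ r) (v ++ r').
Proof.
case=> nuv suv auv [nrr srr arr]; split.
- by rewrite !nbars_cat !oddD nuv nrr.
- by rewrite !s_edge_cat suv srr.
- by rewrite !alt_cat -signr_odd nuv signr_odd auv arr.
Qed.

Lemma interchangeable_barfree u v :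
  Bar \notin u -> Bar \notin v -> s_edge u = s_edge v -> interchangeable u v.
Proof.
move=> bu bv suv; split=> //; last by rewrite !alt_barfree.
by rewrite /nbars (count_memPn bu) (count_memPn bv).
Qed.

Lemma interchangeable_bars2 : interchangeable [:: Bar; Bar] [::].
Proof. by split=> //=; rewrite opprK. Qed.

Lemma interchangeable_pair x y :
  weight (Some x) + weight (Some y) = 0 -> interchangeable [:: Some x; Some y] [::].
Proof.
by move=> wxy; apply: interchangeable_barfree; rewrite // s_edgeE !big_cons big_nil addr0.
Qed.

Lemma interchangeable_rev P : Bar \notin P -> interchangeable P (rev P).
Proof.
move=> barfree; apply: interchangeable_barfree; rewrite ?mem_rev //.
by apply: s_edge_perm; rewrite perm_sym perm_rev.
Qed.

Lemma interchangeable_flip c o s b :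
  interchangeable ([:: Pass c o s] ++ b ++ [:: Pass c (~~ o) s])
                  ([:: Bar; Pass c (~~ o) s; Bar] ++ b ++ [:: Bar; Pass c o s; Bar]).
Proof.
have wflip : weight (Pass c (~~ o) s) = - weight (Pass c o s).
  exact: weight_flip_over (Pass c o s).
split.
- by rewrite !nbars_cat !oddD /= addbF.
- rewrite !s_edge_cat !(s_edgeE [:: _]) !(s_edgeE [:: _; _; _]) !big_cons !big_nil wflip.
  by rewrite [weight Bar]/weight; ring.
- by rewrite !alt_cat /= wflip; ring.
Qed.

Lemma move_invariants X Y : move X Y ->
  [/\ odd (nbars X) = odd (nbars Y), s_edge X = s_edge Y &
      ~~ odd (nbars X) -> `|alt X|%N = `|alt Y|%N].
Proof.
have of_interchangeable u v : interchangeable u v ->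
    [/\ odd (nbars u) = odd (nbars v), s_edge u = s_edge v &
        ~~ odd (nbars u) -> `|alt u|%N = `|alt v|%N].
  by case=> -> -> ->.
case=> [w k | a b c o s _ | a b e c d s under _ _ _ under_eq
       | a b c d P Q R x y z ex ey ez t m bb _ _ _ PQR | a b | a b e c o s].
- have rot_perm : perm_eq (rot k w) w by rewrite perm_rot.
  split; last by move/(alt_rot k)->.
    by rewrite /nbars (permP rot_perm).
  by rewrite (s_edge_perm rot_perm).
- have cancel_pair : interchangeable [:: Pass c o s; Pass c (~~ o) s] [::].
    by apply: interchangeable_pair; rewrite (weight_flip_over (Pass c o s)) subrr.
  exact: of_interchangeable (interchangeable_cat (interchangeable_refl a)
                 (interchangeable_cat cancel_pair (interchangeable_refl b))).
- have cancel_over : interchangeable [:: Pass c true s; Pass d true (~~ s)] [::].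
    by apply: interchangeable_pair; rewrite /weight; case: (s).
  have cancel_under : interchangeable under [::].
    by case: under_eq => ->; apply: interchangeable_pair; rewrite /weight; case: (s).
  exact: of_interchangeable (interchangeable_cat (interchangeable_refl a)
                 (interchangeable_cat cancel_over (interchangeable_cat (interchangeable_refl b)
                 (interchangeable_cat cancel_under (interchangeable_refl e))))).
- have : all (fun P => Bar \notin P) [:: P; Q; R].
    by rewrite (perm_all _ PQR); case: (t); case: (m); case: (bb).
  case/and4P=> /interchangeable_rev revP /interchangeable_rev revQ /interchangeable_rev revR _.
  exact: of_interchangeable (interchangeable_cat (interchangeable_refl a)
                 (interchangeable_cat revP (interchangeable_cat (interchangeable_refl b)
                 (interchangeable_cat revQ (interchangeable_cat (interchangeable_refl c)
                 (interchangeable_cat revR (interchangeable_refl d))))))).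
- exact: of_interchangeable (interchangeable_cat (interchangeable_refl a)
                 (interchangeable_cat interchangeable_bars2 (interchangeable_refl b))).
- have := interchangeable_cat (interchangeable_flip c o s b) (interchangeable_refl e).
  rewrite -!catA => flip.
  exact: of_interchangeable (interchangeable_cat (interchangeable_refl a) flip).
Qed.

Theorem lemma7p5 (K K' : twisted_diagram) :
  gauss_ok K -> ~~ odd (nbars K) -> (move K K' \/ move K' K) ->
  S_inv K = S_inv K'.
Proof.
move=> gauss_K even_K K_moves.
have [parity s_eq alt_eq] : [/\ odd (nbars K) = odd (nbars K'), s_edge K = s_edge K' &
                                `|alt K|%N = `|alt K'|%N].
  case: K_moves => /move_invariants[parity s_eq alt_eq]; first by split; last exact: alt_eq.
  by split; rewrite // alt_eq // parity.
have s0 := gauss_s_edge gauss_K.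
by rewrite (S_inv_alt even_K s0) alt_eq S_inv_alt -?parity -?s_eq.
Qed.
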